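(* Let $p\geq 1$ and let $n_0<n_1<\cdots<n_p$ be positive integers with $n_i=n_0+id$ for a fixed positive integer $d$, such that $\gcd(n_0,\dots,n_p)=1$ and $\{n_0,\dots,n_p\}$ minimally generates the numerical semigroup $S_1=\langle n_0,\dots,n_p\rangle$. Let $s\in\mathrm{Ap}(S_1,n_p)$ and suppose $s=\sum_{i=0}^p\lambda_in_i=\sum_{i=0}^p\lambda_i'n_i$ with all $\lambda_i,\lambda_i'\in\mathbb{N}$. Then \[\sum_{i=0}^p\lambda_i(p-i)d=\sum_{i=0}^p\lambda_i'(p-i)d.\]
   Context: For a numerical semigroup $T$ and $0\neq a\in T$, the Apéry set is $\mathrm{Ap}(T,a)=\{s\in T: s-a\notin T\}$. *)

From mathcomp Require Import all_boot.
Set Implicit Arguments. Unset Strict Implicit. Unset Printing Implicit Defensive.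

Definition in_sg (p : nat) (g : nat -> nat) (s : nat) : Prop :=
  exists lam : nat -> nat, s = \sum_(i < p.+1) lam i * g i.

(* Apery set Ap(S,a) = {s in S : s - a notin S} (s - a taken in Z;
   a negative integer is never in S). *)
Definition in_Apery (p : nat) (g : nat -> nat) (a s : nat) : Prop :=
  in_sg p g s /\ ~ (a <= s /\ in_sg p g (s - a)).

Definition minimally_generates (p : nat) (g : nat -> nat) : Prop :=
  forall j, j <= p ->
    ~ (exists lam : nat -> nat, lam j = 0 /\ g j = \sum_(i < p.+1) lam i * g i).

(** An element of the semigroup is [L n0 + A d] for a factorization of length
    [L = sum lam_i] and weight [A = sum lam_i i], and [sum lam_i (p - i) = p L - A],
    so it suffices that all factorizations of [s] share length and weight.  If two
    factorizations of [s] had lengths [L < L'], then [(L' - L) n0 = (A - A') d]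
    with [gcd(n0, d) = 1] forces [A >= n0 > p] (minimality gives [n0 > p]); as
    [A <= p L], the element [s - n_p = (L - 1) n0 + (A - p) d] is again a combination
    of [L - 1] generators, contradicting [s \in Ap(S, n_p)].  Equal lengths then
    give equal weights since [d > 0]. *)

From mathcomp Require Import all_boot.
From mathcomp Require Import zify.

Set Implicit Arguments.
Unset Strict Implicit.
Unset Printing Implicit Defensive.

Definition factor_length (p : nat) (lam : nat -> nat) : nat :=
  \sum_(i < p.+1) lam i.

Definition factor_weight (p : nat) (lam : nat -> nat) : nat :=
  \sum_(i < p.+1) lam i * i.

Lemma sum_arith (p n0 d : nat) (lam : nat -> nat) :
  \sum_(i < p.+1) lam i * (n0 + i * d) =
  factor_length p lam * n0 + factor_weight p lam * d.
Proof.
rewrite !big_distrl -big_split /=; apply: eq_bigr => i _.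
by rewrite mulnDr mulnA.
Qed.

Lemma factor_weight_add (p : nat) (lam : nat -> nat) :
  \sum_(i < p.+1) lam i * (p - i) + factor_weight p lam = p * factor_length p lam.
Proof.
rewrite -big_split big_distrr /=; apply: eq_bigr => i _.
by rewrite -mulnDr subnK 1?mulnC // -ltnS.
Qed.

Lemma sum_indicator (p j : nat) (f : nat -> nat) : j <= p ->
  \sum_(i < p.+1) (i == j :> nat) * f i = f j.
Proof.
move=> le_jp; rewrite (bigD1 (Ordinal (le_jp : j < p.+1))) //= eqxx mul1n.
rewrite big1 ?addn0 // => i ne_ij.
suff /negbTE -> : (i : nat) != j by [].
by apply: contra ne_ij => /eqP eq_ij; apply/eqP/val_inj.
Qed.

Lemma bounded_decomposition (p q M B : nat) : q <= p -> B <= q * M ->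
  exists mu : nat -> nat, [/\ forall i, q < i -> mu i = 0,
    factor_length p mu = M & factor_weight p mu = B].
Proof.
move=> le_qp; elim: M B => [|M IH] B le_B.
  exists (fun=> 0); rewrite /factor_length /factor_weight !big1 //.
  by move: le_B; rewrite muln0 leqn0 => /eqP.
pose j := minn B q.
have le_jp : j <= p by rewrite /j; lia.
have [mu [mu_out len_mu weight_mu]] := IH (B - j) ltac:(rewrite /j; lia).
exists (fun i => mu i + (i == j)); split.
- by move=> i lt_qi; rewrite mu_out //; case: eqP => // eq_ij; move: lt_qi; lia.
- rewrite /factor_length big_split /= -/(factor_length p mu) len_mu -[M.+1]addn1.
  congr (_ + _).
  by rewrite -(sum_indicator (fun=> 1) le_jp); apply: eq_bigr => i _; rewrite muln1.
- rewrite /factor_weight; under eq_bigr do rewrite mulnDl.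
  rewrite big_split /= -/(factor_weight p mu) weight_mu.
  by rewrite (sum_indicator (fun i => i) le_jp) /j; lia.
Qed.

Lemma arith_combination (p q n0 d L A : nat) : q <= p -> A <= q * L ->
  exists lam : nat -> nat, (forall i, q < i -> lam i = 0) /\
    L * n0 + A * d = \sum_(i < p.+1) lam i * (n0 + i * d).
Proof.
move=> le_qp le_A.
have [mu [mu_out len_mu weight_mu]] := bounded_decomposition le_qp le_A.
by exists mu; rewrite sum_arith len_mu weight_mu.
Qed.

Lemma arith_gcd_coprime (p n0 d : nat) :
  \big[gcdn/0]_(i < p.+1) (n0 + i * d) = 1 -> coprime n0 d.
Proof.
rewrite /coprime -dvdn1 => <-.
apply: (big_ind (fun x => gcdn n0 d %| x)) => [|x y dx dy|i _].
- exact: dvdn0.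
- by rewrite dvdn_gcd dx dy.
- by rewrite dvdn_add ?dvdn_gcdl // dvdn_mull // dvdn_gcdr.
Qed.

(* If [n0 <= p] then [n_p = (d + 1) n0 + (p - n0) d] uses only generators below [n_p]. *)
Lemma minimal_arith_lt (p n0 d : nat) : 0 < p -> 0 < n0 ->
  minimally_generates p (fun i => n0 + i * d) -> p < n0.
Proof.
move=> p_gt0 n0_gt0 min_gen; rewrite ltnNge; apply/negP => le_n0p.
have le_weight : p - n0 <= p.-1 * d.+1 by nia.
have [lam [lam_out comb]] := arith_combination n0 d (leq_pred p) le_weight.
apply: (min_gen p (leqnn p)); exists lam; split; first by apply: lam_out; lia.
by rewrite -comb; nia.
Qed.

Lemma coprime_comb_leq (n0 d L A L' A' : nat) : 0 < d -> coprime n0 d ->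
  L * n0 + A * d = L' * n0 + A' * d -> L < L' -> n0 <= A.
Proof.
move=> d_gt0 co_n0d eq_comb lt_LL'.
have eq_diff : (L' - L) * n0 = (A - A') * d by nia.
have d_dvd : d %| L' - L.
  by rewrite -(@Gauss_dvdl _ _ n0) 1?coprime_sym // eq_diff dvdn_mull.
have := dvdn_leq (ltac:(lia) : 0 < L' - L) d_dvd; nia.
Qed.

Lemma Apery_length_max (p n0 d s : nat) (lam lam' : nat -> nat) :
  0 < d -> coprime n0 d -> p < n0 ->
  in_Apery p (fun i => n0 + i * d) (n0 + p * d) s ->
  s = \sum_(i < p.+1) lam i * (n0 + i * d) ->
  s = \sum_(i < p.+1) lam' i * (n0 + i * d) ->
  factor_length p lam' <= factor_length p lam.
Proof.
move=> d_gt0 co_n0d lt_pn0 [_ not_shift] s_lam s_lam'.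
rewrite leqNgt; apply/negP => lt_len.
rewrite sum_arith in s_lam; rewrite sum_arith in s_lam'.
set L := factor_length p lam in s_lam lt_len; set A := factor_weight p lam in s_lam.
have le_n0A : n0 <= A :=
  coprime_comb_leq d_gt0 co_n0d (etrans (esym s_lam) s_lam') lt_len.
have le_ApL : A <= p * L by rewrite -(factor_weight_add p lam) leq_addl.
have le_shift : A - p <= p * L.-1 by nia.
have [lam'' [_ comb]] := arith_combination n0 d (leqnn p) le_shift.
apply: not_shift; split; first by nia.
by exists lam''; rewrite -comb s_lam; nia.
Qed.

Theorem lemma4p4 (p n0 d : nat) (s : nat) (lam lam' : nat -> nat) :
  1 <= p -> 0 < n0 -> 0 < d ->
  \big[gcdn/0]_(i < p.+1) (n0 + i * d) = 1 ->
  minimally_generates p (fun i => n0 + i * d) ->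
  in_Apery p (fun i => n0 + i * d) (n0 + p * d) s ->
  s = \sum_(i < p.+1) lam i * (n0 + i * d) ->
  s = \sum_(i < p.+1) lam' i * (n0 + i * d) ->
  \sum_(i < p.+1) lam i * (p - i) * d = \sum_(i < p.+1) lam' i * (p - i) * d.
Proof.
move=> p_gt0 n0_gt0 d_gt0 gcd1 min_gen s_Ap s_lam s_lam'.
have co_n0d := arith_gcd_coprime gcd1.
have lt_pn0 := minimal_arith_lt p_gt0 n0_gt0 min_gen.
have eq_len : factor_length p lam = factor_length p lam'.
  have len_max := Apery_length_max d_gt0 co_n0d lt_pn0 s_Ap.
  by apply/anti_leq; rewrite (len_max _ _ s_lam s_lam') (len_max _ _ s_lam' s_lam).
have eq_weight : factor_weight p lam = factor_weight p lam'.
  move: s_lam s_lam'; rewrite !sum_arith eq_len => -> /addnI /eqP.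
  by rewrite eqn_pmul2r // => /eqP.
rewrite -!big_distrl /=; congr (_ * d); apply/(@addIn (factor_weight p lam)).
by rewrite {2}eq_weight !factor_weight_add eq_len.
Qed.
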